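(* Let $c>0$. There is a constant $C=C(c)$ such that the following holds. Let $H=(V,\mathcal{E})$ be a hypergraph with $|V|=n$ whose Delaunay graph is hereditarily $c$-linear, let $k=\max_{e\in\mathcal{E}}|e|$, and let $X=\{\{p,q\}: p,q\in V,\ p\ne q,\ p,q \text{ are friends}\}$. Then $|X|\le C\, n\, \max(k,1)$, i.e. $|X|=O(nk)$.
   Context: A hypergraph $H=(V,\mathcal{E})$ consists of a finite vertex set $V$ and a collection $\mathcal{E}$ of subsets of $V$ (hyperedges). For $S\subseteq V$, the induced subhypergraph is $H|_S=(S,\{e\cap S: e\in\mathcal{E}\})$. The Delaunay graph of a hypergraph $H=(V,\mathcal{E})$ is the graph on vertex set $V$ whose edges are the hyperedges $e\in\mathcal{E}$ with $|e|=2$. $H$ has a hereditarily $c$-linear Delaunay graph if for every nonempty $S\subseteq V$, the Delaunay graph $G_S$ of $H|_S$ satisfies $|E(G_S)|<c\,|S|$. Two vertices $u,v\in V$ are friends if there is some $e\in\mathcal{E}$ with $u,v\in e$. *)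

From mathcomp Require Import all_boot.
From Stdlib Require Import Reals.
Set Implicit Arguments. Unset Strict Implicit. Unset Printing Implicit Defensive.

(* A hypergraph on a finite vertex type V is given by its set of hyperedges
   E : {set {set V}}. *)

(* Edge set of the Delaunay graph of the induced subhypergraph H|_S:
   the traces e ∩ S (e ∈ E) having exactly two elements. *)
Definition delaunay_edges (V : finType) (E : {set {set V}}) (S : {set V})
  : {set {set V}} :=
  [set e :&: S | e in E & #|e :&: S| == 2].

Definition hered_c_linear (V : finType) (E : {set {set V}}) (c : R) : Prop :=
  forall S : {set V}, S != set0 ->
    (INR #|delaunay_edges E S| < c * INR #|S|)%R.

(* Maximum hyperedge size k (0 if there are no hyperedges). *)
Definition max_edge_size (V : finType) (E : {set {set V}}) : nat :=
  \max_(e in E) #|e|.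

Definition friend_pairs (V : finType) (E : {set {set V}}) : {set {set V}} :=
  [set P : {set V} | [exists p : V, exists q : V,
     [&& p != q, P == [set p; q] & [exists e in E, (p \in e) && (q \in e)]]]].

From mathcomp Require Import all_boot zify.
From Stdlib Require Import Reals Lra.
(* Stdlib's Arith rebinds [^] to [Nat.pow]; restore ssrnat's [expn]. *)
Import ssrnat.

(* Sample S ⊆ V by keeping the zeros of a uniform f : V -> 'I_(N+1), i.e. each
   vertex independently with probability 1/(N+1), where N = 2 max(k,1).  On
   average |S| = n/(N+1), so hereditary linearity bounds the expected number
   of Delaunay edges of H|_S by c n/(N+1).  A friend pair {p,q} lying in a
   hyperedge e is such an edge as soon as S ∩ e = {p,q}, which happens with
   probability (1/(N+1))^2 (1 - 1/(N+1))^(|e|-2) >= 1/(2 (N+1)^2) by Bernoulli's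
   inequality, since |e| <= N/2.  Comparing the two expectations gives
   |X| <= 2 c n (N+1) <= 6 c n max(k,1). *)

Lemma expn_Bernoulli (N a : nat) : a <= N.+1 -> N.+1 ^ a * (N.+1 - a) <= N.+1 * N ^ a.
Proof.
elim: a => [|a IH] a_le; first by rewrite !expn0 subn0 muln1 mul1n.
have {}IH := IH (ltnW a_le); rewrite !expnS.
have step : N.+1 * (N.+1 - a.+1) <= N * (N.+1 - a) by nia.
move: IH step; set x := N.+1 ^ a; set y := N ^ a; nia.
Qed.

Lemma expnS_le_double (N a : nat) : 2 * a <= N -> N.+1 ^ a <= 2 * N ^ a.
Proof.
move=> aN; have := @expn_Bernoulli N a; set x := N.+1 ^ a; set y := N ^ a.
have a_le : a <= N.+1 by lia.
move=> /(_ a_le); nia.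
Qed.

Lemma sum_card_exchange (A B : finType) (D : A -> {set B}) :
  \sum_(a : A) #|D a| = \sum_(b : B) #|[pred a | b \in D a]|.
Proof.
under eq_bigr do rewrite -sum1_card big_mkcond /=.
rewrite exchange_big; apply: eq_bigr => b _; rewrite -sum1_card [RHS]big_mkcond.
by apply: eq_bigr => a _; rewrite inE.
Qed.

Lemma INR_sum_le (I : finType) (a b : I -> nat) (c : R) :
  (forall i, INR (a i) <= c * INR (b i))%R ->
  (INR (\sum_(i : I) a i) <= c * INR (\sum_(i : I) b i))%R.
Proof.
move=> le_ab; apply: (big_ind2 (fun x y => INR x <= c * INR y)%R) => //=.
- lra.
- by move=> x1 x2 y1 y2 h1 h2; rewrite !plus_INR; lra.
Qed.

Section ZeroSetSampling.
Variables (V : finType) (N : nat).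

Definition zero_set (f : {ffun V -> 'I_N.+1}) : {set V} := [set x | f x == ord0].

Lemma card_ffun_pointwise (F : V -> pred 'I_N.+1) :
  #|[pred f : {ffun V -> 'I_N.+1} | [forall x, f x \in F x]]| = \prod_(x : V) #|F x|.
Proof.
transitivity #|(finfun.family F : simpl_pred {ffun V -> 'I_N.+1})|.
  by apply: eq_card => f; rewrite !inE.
by rewrite card_family foldrE big_map big_enum.
Qed.

Lemma sum_card_zero_set : \sum_f #|zero_set f| = #|V| * N.+1 ^ #|V|.-1.
Proof.
rewrite sum_card_exchange -sum_nat_const; apply: eq_bigr => v _.
pose F x := [pred y : 'I_N.+1 | (x == v) ==> (y == ord0)].
rewrite (@eq_card _ _ [pred f : {ffun V -> 'I_N.+1} | [forall x, f x \in F x]]); last first.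
  move=> f; rewrite !inE; apply/idP/forallP => [/eqP fv x | /(_ v)].
    by rewrite inE; apply/implyP => /eqP ->; rewrite fv.
  by rewrite inE eqxx.
rewrite card_ffun_pointwise (bigD1 v) //= -(cardC1 v) -prod_nat_const.
rewrite (@eq_card _ _ (pred1 ord0)) ?card1 ?mul1n => [|y]; last by rewrite !inE eqxx.
apply: eq_bigr => x xv; rewrite -[RHS](card_ord N.+1); apply: eq_card => y.
by rewrite !inE (negbTE xv).
Qed.

Lemma card_trace_zero_set (e P : {set V}) : P \subset e ->
  #|[pred f : {ffun V -> 'I_N.+1} | e :&: zero_set f == P]| =
  N ^ (#|e| - #|P|) * N.+1 ^ (#|V| - #|e|).
Proof.
move=> Pe.
pose F x := [pred y : 'I_N.+1 |
  if x \in P then y == ord0 else if x \in e then y != ord0 else true].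
rewrite (@eq_card _ _ [pred f : {ffun V -> 'I_N.+1} | [forall x, f x \in F x]]); last first.
  move=> f; rewrite !inE; apply/eqP/forallP => [eSP x | fF].
    by rewrite !inE -eSP !inE; case: (x \in e); case: (f x == ord0).
  apply/setP => x; have := fF x; rewrite !inE.
  case: (boolP (x \in P)) => [xP -> | _]; first by rewrite (subsetP Pe).
  by case: (x \in e) => //= /negbTE.
rewrite card_ffun_pointwise (bigID (mem e)) /= (bigID (mem P)) /=.
rewrite big1 ?mul1n => [|x /andP [_ xP]]; last first.
  by rewrite (@eq_card _ _ (pred1 ord0)) ?card1 // => y; rewrite !inE xP.
rewrite (eq_bigr (fun _ => N)) => [|x /andP [xe xP]]; last first.
  rewrite -[RHS]/(N.+1.-1) -[in RHS](card_ord N.+1) -(cardC1 ord0).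
  by apply: eq_card => y; rewrite !inE (negbTE xP) xe.
rewrite [X in _ * X](eq_bigr (fun _ => N.+1)) => [|x xe]; last first.
  have xP : x \notin P := contraNN (subsetP Pe x) xe.
  rewrite -[RHS](card_ord N.+1); apply: eq_card => y.
  by rewrite !inE (negbTE xP) (negbTE xe).
rewrite !prod_nat_const; congr (N ^ _ * _ ^ _).
- transitivity #|e :\: P|; first by apply: eq_card => x; rewrite !inE andbC.
  by rewrite cardsD (setIidPr Pe).
- transitivity #|~: e|; first by apply: eq_card => x; rewrite !inE.
  by rewrite cardsCs setCK.
Qed.

End ZeroSetSampling.

Arguments zero_set {V N} f.

Section FriendPairs.
Variables (V : finType) (E : {set {set V}}).

Lemma friend_pair_in_edge (P : {set V}) :
  P \in friend_pairs E -> exists2 e, e \in E & P \subset e /\ #|P| = 2.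
Proof.
rewrite inE => /existsP [p /existsP [q /and3P [pq /eqP -> /existsP [e]]]].
case/andP=> eE /andP [pe qe]; exists e => //; split; last by rewrite cards2 pq.
by apply/subsetP => x; rewrite !inE => /orP [] /eqP ->.
Qed.

Lemma card_delaunay_le (c : R) : hered_c_linear E c ->
  forall S, (INR #|delaunay_edges E S| <= c * INR #|S|)%R.
Proof.
move=> lin S; have [-> | S_n0] := eqVneq S set0; last exact/Rlt_le/lin.
suff -> : delaunay_edges E set0 = set0 by rewrite !cards0 /=; lra.
by apply/setP => P; rewrite inE; apply/imsetP => -[e]; rewrite inE setI0 cards0 andbF.
Qed.

Lemma friend_pair_sample_count (N : nat) (P : {set V}) :
  2 * max_edge_size E <= N -> P \in friend_pairs E ->
  N.+1 ^ (#|V| - 2) <=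
  2 * #|[pred f : {ffun V -> 'I_N.+1} | P \in delaunay_edges E (zero_set f)]|.
Proof.
move=> kN /friend_pair_in_edge [e eE [Pe cardP]].
have e_k : #|e| <= max_edge_size E by exact: leq_bigmax_cond.
have e_2 : 2 <= #|e| by rewrite -cardP subset_leq_card.
have e_V : #|e| <= #|V| by exact: max_card.
have trace_sub : [pred f : {ffun V -> 'I_N.+1} | e :&: zero_set f == P] \subset
                 [pred f | P \in delaunay_edges E (zero_set f)].
  apply/subsetP => f; rewrite !inE => /eqP eSP.
  by apply/imsetP; exists e; rewrite ?inE eSP ?eE ?cardP.
apply: leq_trans (leq_mul (leqnn 2) (subset_leq_card trace_sub)).
rewrite card_trace_zero_set // cardP mulnA.
rewrite (_ : #|V| - 2 = (#|e| - 2) + (#|V| - #|e|)) ?expnD; last by lia.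
by rewrite leq_mul2r expnS_le_double ?orbT //; lia.
Qed.

Lemma friend_pairs_sample_bound (N : nat) : 2 * max_edge_size E <= N ->
  #|friend_pairs E| * N.+1 ^ (#|V| - 2) <=
  2 * \sum_(f : {ffun V -> 'I_N.+1}) #|delaunay_edges E (zero_set f)|.
Proof.
move=> kN; rewrite sum_card_exchange big_distrr /= -sum_nat_const.
rewrite [X in _ <= X](bigID (mem (friend_pairs E))) /=.
apply: leq_trans (leq_addr _ _); apply: leq_sum => P PX.
exact: friend_pair_sample_count.
Qed.

End FriendPairs.

Theorem mainTheorem2 :
  forall c : R, (0 < c)%R ->
  exists C : R,
    forall (V : finType) (E : {set {set V}}),
      hered_c_linear E c ->
      (INR #|friend_pairs E| <= C * INR #|V| * INR (maxn (max_edge_size E) 1))%R.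
Proof.
move=> c c_gt0; exists (6 * c)%R => V E lin.
set K := maxn (max_edge_size E) 1; set N := 2 * K; set Q := N.+1 ^ (#|V| - 2).
have kN : 2 * max_edge_size E <= N by rewrite leq_mul2l leq_maxl.
have count := @friend_pairs_sample_bound V E N kN; rewrite -/Q in count.
have delaunay : (INR (\sum_(f : {ffun V -> 'I_N.+1}) #|delaunay_edges E (zero_set f)|)
                 <= c * INR (\sum_(f : {ffun V -> 'I_N.+1}) #|zero_set f|))%R.
  by apply: INR_sum_le => f; apply: card_delaunay_le.
have sample_size : \sum_(f : {ffun V -> 'I_N.+1}) #|zero_set f| <= 3 * (#|V| * K * Q).
  rewrite sum_card_zero_set -mulnA mulnCA leq_mul2l; apply/orP; right.
  have Q_bound : N.+1 ^ #|V|.-1 <= N.+1 * Q by rewrite -expnS leq_pexp2l //; lia.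
  apply: leq_trans Q_bound _; rewrite mulnA leq_mul2r; apply/orP; right.
  by rewrite /N /K; lia.
move/leP/le_INR: count; move/leP/le_INR: sample_size.
have Q_gt0 : (0 < INR Q)%R by apply/lt_0_INR/ltP; rewrite expn_gt0.
rewrite !mult_INR /= => sample_size count.
have {}sample_size := Rmult_le_compat_l c _ _ (Rlt_le _ _ c_gt0) sample_size.
apply: (Rmult_le_reg_r (INR Q)) => //; apply: (Rle_trans _ _ _ count).
apply: (Rle_trans _ _ _ (Rmult_le_compat_l _ _ _ _ (Rle_trans _ _ _ delaunay sample_size))).
  lra.
by apply: Req_le; ring.
Qed.
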